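(* Let $d\ge1$ and $\alpha>0$. Suppose that for every $n\ge1$ and every finite hypergraph $\mathcal{T}$ of discrete $d$-intervals on $[n]$ one has $\tau^*_\ell(\mathcal{T})\le\alpha d\,\nu_\ell(\mathcal{T})$, where $\ell(T)=|T|$. Then for every hypergraph $H$ of $d$-intervals (on $\mathbb{R}$) and every weight system $w$ on $H$, $\tau_w(H)\le\alpha d^2\,\nu_w(H)$.
   Context: A $d$-interval is a union of at most $d$ pairwise disjoint closed intervals of $\mathbb{R}$; a hypergraph of $d$-intervals is a finite family of $d$-intervals, regarded as a hypergraph on vertex set $\mathbb{R}$. A discrete $d$-interval on $[n]=\{1,\dots,n\}$ is a union of at most $d$ pairwise disjoint nonempty sets of consecutive integers; a hypergraph of discrete $d$-intervals on $[n]$ is a finite family of these, regarded as a hypergraph on vertex set $[n]$. A matching is a set of pairwise disjoint edges. For a weight function $w$ on the edges (with values in $\mathbb{N}$; for $\ell$, $\ell(T)=|T|$), $\nu_w$ is the maximum of $\sum_{h\in M}w(h)$ over matchings $M$; a $w$-cover is a finitely supported $g$ from the vertex set to $\mathbb{N}$ with $\sum_{v\in h}g(v)\ge w(h)$ for every edge $h$, and $\tau_w$ is the minimum of $\sum_v g(v)$ over $w$-covers; $\tau^*_w$ is defined the same way with $g$ taking values in $\mathbb{R}_{\ge0}$ (infimum). A weight system on $H$ is a function $w:H\to\mathbb{N}$. *)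

From Stdlib Require Import Reals List Arith.
Import ListNotations.
Open Scope R_scope.

Definition Rsum (l : list R) : R := fold_right Rplus 0 l.

Definition in_ival (I : R * R) (x : R) : Prop := fst I <= x <= snd I.

Definition in_ivalb (I : R * R) (x : R) : bool :=
  if Rle_dec (fst I) x then (if Rle_dec x (snd I) then true else false) else false.

Definition in_dint (h : list (R * R)) (x : R) : Prop := Exists (fun I => in_ival I x) h.

Definition in_dintb (h : list (R * R)) (x : R) : bool := existsb (fun I => in_ivalb I x) h.

Definition ivals_disjoint (I J : R * R) : Prop := forall x, ~ (in_ival I x /\ in_ival J x).

Definition is_dinterval (d : nat) (h : list (R * R)) : Prop :=
  (1 <= length h <= d)%nat /\
  Forall (fun I => fst I <= snd I) h /\
  ForallOrdPairs ivals_disjoint h.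

(* A hypergraph of d-intervals: a finite family (list, repetitions allowed)
   of d-intervals; edges are indexed by positions 0 .. length H - 1. *)
Definition is_dint_hypergraph (d : nat) (H : list (list (R * R))) : Prop :=
  Forall (is_dinterval d) H.

Definition edge (H : list (list (R * R))) (i : nat) : list (R * R) := nth i H [].

Definition is_matching (H : list (list (R * R))) (M : list nat) : Prop :=
  NoDup M /\ (forall i, In i M -> (i < length H)%nat) /\
  (forall i j, In i M -> In j M -> i <> j ->
     forall x, ~ (in_dint (edge H i) x /\ in_dint (edge H j) x)).

Definition match_weight (w : nat -> nat) (M : list nat) : nat := list_sum (map w M).

Definition IsNu (H : list (list (R * R))) (w : nat -> nat) (nu : nat) : Prop :=
  (exists M, is_matching H M /\ match_weight w M = nu) /\
  (forall M, is_matching H M -> (match_weight w M <= nu)%nat).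

Definition fin_supp (S : list R) (g : R -> nat) : Prop :=
  NoDup S /\ forall x, ~ In x S -> g x = 0%nat.

Definition total (S : list R) (g : R -> nat) : nat := list_sum (map g S).

Definition edge_sum (S : list R) (g : R -> nat) (h : list (R * R)) : nat :=
  list_sum (map (fun v => if in_dintb h v then g v else 0%nat) S).

Definition is_wcover (H : list (list (R * R))) (w : nat -> nat)
    (S : list R) (g : R -> nat) : Prop :=
  fin_supp S g /\ forall i, (i < length H)%nat -> (w i <= edge_sum S g (edge H i))%nat.

Definition IsTau (H : list (list (R * R))) (w : nat -> nat) (t : nat) : Prop :=
  (exists S g, is_wcover H w S g /\ total S g = t) /\
  (forall S g, is_wcover H w S g -> (t <= total S g)%nat).

Definition in_divalb (I : nat * nat) (v : nat) : bool :=
  Nat.leb (fst I) v && Nat.leb v (snd I).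

Definition in_ddintb (T : list (nat * nat)) (v : nat) : bool :=
  existsb (fun I => in_divalb I v) T.

Definition divals_disjoint (I J : nat * nat) : Prop :=
  forall v, ~ (in_divalb I v = true /\ in_divalb J v = true).

Definition is_discrete_dinterval (d n : nat) (T : list (nat * nat)) : Prop :=
  (1 <= length T <= d)%nat /\
  Forall (fun I => (1 <= fst I)%nat /\ (fst I <= snd I)%nat /\ (snd I <= n)%nat) T /\
  ForallOrdPairs divals_disjoint T.

Definition is_discrete_hypergraph (d n : nat) (T : list (list (nat * nat))) : Prop :=
  Forall (is_discrete_dinterval d n) T.

Definition vertices (n : nat) : list nat := seq 1 n.

Definition dedge (T : list (list (nat * nat))) (i : nat) : list (nat * nat) := nth i T [].

Definition dsize (n : nat) (e : list (nat * nat)) : nat :=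
  length (filter (in_ddintb e) (vertices n)).

Definition is_dmatching (n : nat) (T : list (list (nat * nat))) (M : list nat) : Prop :=
  NoDup M /\ (forall i, In i M -> (i < length T)%nat) /\
  (forall i j, In i M -> In j M -> i <> j ->
     forall v, ~ (in_ddintb (dedge T i) v = true /\ in_ddintb (dedge T j) v = true)).

Definition IsNuLen (n : nat) (T : list (list (nat * nat))) (nu : nat) : Prop :=
  (exists M, is_dmatching n T M /\ list_sum (map (fun i => dsize n (dedge T i)) M) = nu) /\
  (forall M, is_dmatching n T M ->
     (list_sum (map (fun i => dsize n (dedge T i)) M) <= nu)%nat).

Definition is_frac_lcover (n : nat) (T : list (list (nat * nat))) (g : nat -> R) : Prop :=
  (forall v, In v (vertices n) -> 0 <= g v) /\
  forall i, (i < length T)%nat ->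
    INR (dsize n (dedge T i)) <=
    Rsum (map g (filter (in_ddintb (dedge T i)) (vertices n))).

Definition frac_total (n : nat) (g : nat -> R) : R := Rsum (map g (vertices n)).

Definition IsTauStarLen (n : nat) (T : list (list (nat * nat))) (ts : R) : Prop :=
  (forall g, is_frac_lcover n T g -> ts <= frac_total n g) /\
  (forall b, (forall g, is_frac_lcover n T g -> b <= frac_total n g) -> b <= ts).

From Stdlib Require Import Reals List Arith Lia Lra ZArith Sorting.Sorted Classical.
Import ListNotations.
Open Scope R_scope.

(* 1. Atoms.  The sorted left endpoints p_0 < ... < p_(m-1) of all component
      intervals of H: every edge contains an atom, and two edges meet iff they
      share one.  V is the infimum of the totals of fractional w-covers of H
      supported on the atoms (atomic covers).
   2. Rounding: tau_w(H) <= d V.  By pigeonhole every edge has a component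
      carrying 1/d of its demand; taking floors of the cumulative sums of
      d G along the atoms turns an atomic cover G into an integral cover of
      total <= d atot(G).
   3. Blow-up: V <= alpha d nu_w(H).  For a near-optimal G, a scale c and a
      slack delta, atom j becomes a block of about c G_j consecutive integers
      and only the delta-tight edges are kept.  This is a hypergraph of
      discrete d-intervals whose tau*_ell is about c V (a fractional
      ell-cover mixed with G is again an atomic cover) and whose nu_ell is
      about c nu_w(H) (its matchings are matchings of H).  The hypothesis
      then gives the bound in the limit delta -> 0, c -> oo. *)

Lemma Rsum_app l1 l2 : Rsum (l1 ++ l2) = Rsum l1 + Rsum l2.
Proof. induction l1; simpl; [lra|rewrite IHl1; lra]. Qed.

Lemma Rsum_map_plus {A} (f g : A -> R) l :
  Rsum (map (fun x => f x + g x) l) = Rsum (map f l) + Rsum (map g l).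
Proof. induction l; simpl; [lra|rewrite IHl; lra]. Qed.

Lemma Rsum_map_scal {A} (c : R) (f : A -> R) l :
  Rsum (map (fun x => c * f x) l) = c * Rsum (map f l).
Proof. induction l; simpl; [lra|rewrite IHl; lra]. Qed.

Lemma Rsum_map_le {A} (f g : A -> R) l :
  (forall x, In x l -> f x <= g x) -> Rsum (map f l) <= Rsum (map g l).
Proof.
  induction l as [|a l IH]; simpl; intros Hle; [lra|].
  pose proof (Hle a (or_introl eq_refl)). pose proof (IH (fun x Hx => Hle x (or_intror Hx))).
  lra.
Qed.

Lemma Rsum_map_ext {A} (f g : A -> R) l :
  (forall x, In x l -> f x = g x) -> Rsum (map f l) = Rsum (map g l).
Proof. intros Heq. f_equal. apply map_ext_in. exact Heq. Qed.

Lemma Rsum_map_const {A} (c : R) (l : list A) :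
  Rsum (map (fun _ => c) l) = INR (length l) * c.
Proof. induction l; simpl length; rewrite ?S_INR; simpl; [lra|rewrite IHl; lra]. Qed.

Lemma Rsum_map_nonneg {A} (f : A -> R) l :
  (forall x, In x l -> 0 <= f x) -> 0 <= Rsum (map f l).
Proof.
  intros Hf. pose proof (Rsum_map_le (fun _ => 0) f l Hf) as Hle.
  rewrite Rsum_map_const in Hle. lra.
Qed.

Lemma Rsum_ge_term {A} (f : A -> R) l a :
  (forall x, In x l -> 0 <= f x) -> In a l -> f a <= Rsum (map f l).
Proof.
  induction l as [|b l IH]; simpl; intros Hf Ha; [tauto|].
  assert (0 <= Rsum (map f l)) by (apply Rsum_map_nonneg; auto).
  destruct Ha as [<-|Ha]; [lra|].
  pose proof (Hf b (or_introl eq_refl)). pose proof (IH (fun x Hx => Hf x (or_intror Hx)) Ha).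
  lra.
Qed.

Lemma Rsum_map_lt {A} (f g : A -> R) l : l <> [] ->
  (forall x, In x l -> f x < g x) -> Rsum (map f l) < Rsum (map g l).
Proof.
  destruct l as [|a l]; [tauto|]. intros _ Hlt. simpl.
  assert (f a < g a) by (apply Hlt; simpl; auto).
  assert (Rsum (map f l) <= Rsum (map g l)).
  { apply Rsum_map_le. intros. apply Rlt_le, Hlt; simpl; auto. }
  lra.
Qed.

Lemma Rsum_exchange {A B} (F : A -> B -> R) la lb :
  Rsum (map (fun a => Rsum (map (fun b => F a b) lb)) la) =
  Rsum (map (fun b => Rsum (map (fun a => F a b) la)) lb).
Proof.
  induction la; simpl.
  - rewrite Rsum_map_const. lra.
  - rewrite IHla, <- Rsum_map_plus. reflexivity.
Qed.

Lemma Rsum_flat_map {A B} (f : B -> R) (g : A -> list B) l :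
  Rsum (map f (flat_map g l)) = Rsum (map (fun a => Rsum (map f (g a))) l).
Proof. induction l; simpl; auto. rewrite map_app, Rsum_app, IHl; auto. Qed.

Lemma Rsum_filter {A} (p : A -> bool) (f : A -> R) l :
  Rsum (map f (filter p l)) = Rsum (map (fun x => if p x then f x else 0) l).
Proof. induction l; simpl; auto. destruct (p a); simpl; rewrite IHl; lra. Qed.

Lemma INR_list_sum l : INR (list_sum l) = Rsum (map INR l).
Proof. induction l; simpl; auto. rewrite plus_INR, IHl; auto. Qed.

Lemma list_sum_map_le {A} (f g : A -> nat) l :
  (forall x, In x l -> (f x <= g x)%nat) -> (list_sum (map f l) <= list_sum (map g l))%nat.
Proof.
  induction l as [|a l IH]; simpl; intros Hle; [lia|].
  pose proof (Hle a (or_introl eq_refl)). pose proof (IH (fun x Hx => Hle x (or_intror Hx))).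
  lia.
Qed.

Lemma list_sum_map_const {A} (c : nat) (l : list A) :
  list_sum (map (fun _ => c) l) = (length l * c)%nat.
Proof. induction l; simpl; auto. Qed.

Lemma list_sum_filter {A} (p : A -> bool) (f : A -> nat) l :
  list_sum (map f (filter p l)) = list_sum (map (fun x => if p x then f x else 0%nat) l).
Proof. induction l; simpl; auto. destruct (p a); simpl; rewrite IHl; lia. Qed.

Lemma list_sum_ge_term {A} (f : A -> nat) l x : In x l -> (f x <= list_sum (map f l))%nat.
Proof.
  induction l; simpl; intros Hin; [tauto|].
  destruct Hin as [<-|Hx]; [lia|]. specialize (IHl Hx). lia.
Qed.

Lemma filter_all_true {A} (p : A -> bool) l :
  (forall x, In x l -> p x = true) -> filter p l = l.
Proof. intros Hp. rewrite (filter_ext_in p (fun _ => true) l) by auto. apply filter_true. Qed.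

Lemma filter_all_false {A} (p : A -> bool) l :
  (forall x, In x l -> p x = false) -> filter p l = [].
Proof. intros Hp. rewrite (filter_ext_in p (fun _ => false) l) by auto. apply filter_false. Qed.

Lemma filter_flat_map {A B} (p : B -> bool) (g : A -> list B) l :
  filter p (flat_map g l) = flat_map (fun a => filter p (g a)) l.
Proof. induction l; simpl; auto. rewrite filter_app, IHl; auto. Qed.

Lemma flat_map_ext_in {A B} (f g : A -> list B) l :
  (forall x, In x l -> f x = g x) -> flat_map f l = flat_map g l.
Proof. intros Heq. rewrite !flat_map_concat_map. f_equal. apply map_ext_in. exact Heq. Qed.

Lemma filter_seq_range lo hi m : (lo <= hi <= m)%nat ->
  filter (fun j => andb (Nat.leb lo j) (Nat.ltb j hi)) (seq 0 m) = seq lo (hi - lo).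
Proof.
  intros Hr. replace m with (lo + ((hi - lo) + (m - hi)))%nat at 1 by lia.
  rewrite !seq_app, !filter_app. simpl.
  rewrite (filter_all_false _ (seq 0 lo)), (filter_all_true _ (seq lo _)),
    (filter_all_false _ (seq _ (m - hi))).
  { simpl. apply app_nil_r. }
  all: intros j Hj; apply in_seq in Hj;
    destruct (Nat.leb_spec lo j), (Nat.ltb_spec j hi); auto; lia.
Qed.

(* The integer part [Int_part x = up x - 1] is the floor of x. *)

Lemma Int_part_le x : IZR (Int_part x) <= x.
Proof. apply base_Int_part. Qed.

Lemma Int_part_ge z y : IZR z <= y -> (z <= Int_part y)%Z.
Proof.
  intros Hz. destruct (base_Int_part y) as [_ Hgt].
  assert (Hlt : IZR z < IZR (Int_part y + 1)) by (rewrite plus_IZR; simpl; lra).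
  apply lt_IZR in Hlt. lia.
Qed.

Lemma Int_part_mono x y : x <= y -> (Int_part x <= Int_part y)%Z.
Proof. intros. apply Int_part_ge. pose proof (Int_part_le x). lra. Qed.

Lemma share_le x e : 0 <= x -> 0 <= e -> x * (e / (x + 1)) <= e.
Proof.
  intros Hx He. apply Rmult_le_reg_r with (x + 1); [lra|].
  replace (x * (e / (x + 1)) * (x + 1)) with (x * e) by (field; lra). nra.
Qed.

Lemma inf_exists (P : R -> Prop) :
  (exists x, P x) -> (forall x, P x -> 0 <= x) ->
  exists v, (forall x, P x -> v <= x) /\ (forall b, (forall x, P x -> b <= x) -> b <= v).
Proof.
  intros [x0 Hx0] Hlb.
  destruct (completeness (fun y => P (- y))) as [s [Hub Hlub]].
  - exists 0. intros y Hy. apply Hlb in Hy. lra.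
  - exists (- x0). rewrite Ropp_involutive. auto.
  - exists (- s). split.
    + intros x Px. assert (- x <= s) by (apply Hub; rewrite Ropp_involutive; auto). lra.
    + intros b Hb. assert (s <= - b) by (apply Hlub; intros y Py; apply Hb in Py; lra). lra.
Qed.

Lemma inf_approx (P : R -> Prop) v : (forall b, (forall x, P x -> b <= x) -> b <= v) ->
  forall eps, 0 < eps -> exists x, P x /\ x <= v + eps.
Proof.
  intros Hglb eps Heps. apply NNPP. intros Hnone.
  assert (v + eps <= v); [|lra]. apply Hglb. intros x Px. apply Rnot_lt_le. intros Hx.
  apply Hnone. exists x. split; auto. lra.
Qed.

Lemma nat_max_exists (Q : nat -> Prop) (B : nat) :
  (exists k, Q k) -> (forall k, Q k -> (k <= B)%nat) ->
  exists k, Q k /\ forall k', Q k' -> (k' <= k)%nat.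
Proof.
  intros Hne Hb. induction B as [|B IH].
  - destruct Hne as [k Hk]. exists k. split; auto. intros k' Hk'.
    apply Hb in Hk'. apply Hb in Hk. lia.
  - destruct (classic (Q (S B))) as [HS|HS].
    + exists (S B). split; auto.
    + apply IH. intros k Hk. pose proof (Hb k Hk).
      destruct (Nat.eq_dec k (S B)); subst; [tauto|lia].
Qed.

Fixpoint insert_uniq (x : R) (l : list R) : list R :=
  match l with
  | [] => [x]
  | y :: l' => if Rlt_dec x y then x :: l
               else if Rlt_dec y x then y :: insert_uniq x l' else l
  end.

Definition sort_uniq (l : list R) : list R := fold_right insert_uniq [] l.

Lemma insert_uniq_In x l z : In z (insert_uniq x l) <-> z = x \/ In z l.
Proof.
  induction l as [|y l IH]; simpl.
  - intuition (subst; auto).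
  - destruct (Rlt_dec x y); simpl; [intuition (subst; auto)|].
    destruct (Rlt_dec y x); simpl.
    + rewrite IH. intuition (subst; auto).
    + assert (x = y) by lra. subst. intuition (subst; auto).
Qed.

Lemma insert_uniq_sorted x l : StronglySorted Rlt l -> StronglySorted Rlt (insert_uniq x l).
Proof.
  induction l as [|y l IH]; simpl; intros Hs.
  - repeat constructor.
  - inversion Hs as [|? ? Hs' Hy]; subst.
    destruct (Rlt_dec x y).
    + constructor; auto. constructor; auto.
      eapply Forall_impl; [|eauto]. simpl. intros; lra.
    + destruct (Rlt_dec y x); auto. constructor; auto.
      apply Forall_forall. intros z Hz. apply insert_uniq_In in Hz.
      destruct Hz as [->|Hz]; auto. rewrite Forall_forall in Hy; auto.
Qed.

Lemma sort_uniq_In l z : In z (sort_uniq l) <-> In z l.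
Proof. induction l; simpl; [tauto|]. rewrite insert_uniq_In, IHl. intuition (subst; auto). Qed.

Lemma sort_uniq_sorted l : StronglySorted Rlt (sort_uniq l).
Proof. induction l; simpl; [constructor|]. apply insert_uniq_sorted; auto. Qed.

Lemma sorted_NoDup P : StronglySorted Rlt P -> NoDup P.
Proof.
  induction 1 as [|a P _ IH Ha]; constructor; auto. intros Hin.
  rewrite Forall_forall in Ha. specialize (Ha a Hin). lra.
Qed.

Definition rank_lt (P : list R) (x : R) : nat :=
  length (filter (fun p => if Rlt_dec p x then true else false) P).
Definition rank_le (P : list R) (x : R) : nat :=
  length (filter (fun p => if Rle_dec p x then true else false) P).

Lemma rank_le_length P x : (rank_le P x <= length P)%nat.
Proof. apply filter_length_le. Qed.

Lemma rank_lt_spec P x : StronglySorted Rlt P -> forall j, (j < length P)%nat ->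
  (nth j P 0 < x <-> (j < rank_lt P x)%nat).
Proof.
  induction P as [|p P IH]; simpl; intros Hs j Hj; [lia|].
  inversion Hs as [|? ? Hs' Hp]; subst. unfold rank_lt in *; simpl.
  rewrite Forall_forall in Hp.
  destruct (Rlt_dec p x).
  - destruct j; simpl; [split; intros; [lia|auto]|].
    rewrite IH by (auto; lia). lia.
  - rewrite filter_all_false; simpl.
    + destruct j; [split; intros; [tauto|lia]|].
      split; intros; [|lia]. exfalso.
      assert (p < nth j P 0) by (apply Hp, nth_In; lia). lra.
    + intros z Hz. specialize (Hp z Hz). destruct (Rlt_dec z x); auto. lra.
Qed.

Lemma rank_le_spec P x : StronglySorted Rlt P -> forall j, (j < length P)%nat ->
  (nth j P 0 <= x <-> (j < rank_le P x)%nat).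
Proof.
  induction P as [|p P IH]; simpl; intros Hs j Hj; [lia|].
  inversion Hs as [|? ? Hs' Hp]; subst. unfold rank_le in *; simpl.
  rewrite Forall_forall in Hp.
  destruct (Rle_dec p x).
  - destruct j; simpl; [split; intros; [lia|auto]|].
    rewrite IH by (auto; lia). lia.
  - rewrite filter_all_false; simpl.
    + destruct j; [split; intros; [tauto|lia]|].
      split; intros; [|lia]. exfalso.
      assert (p < nth j P 0) by (apply Hp, nth_In; lia). lra.
    + intros z Hz. specialize (Hp z Hz). destruct (Rle_dec z x); auto. lra.
Qed.

Definition lefts (H : list (list (R * R))) : list R := flat_map (map fst) H.
Definition atoms (H : list (list (R * R))) : list R := sort_uniq (lefts H).
Definition natoms (H : list (list (R * R))) : nat := length (atoms H).
Definition atom (H : list (list (R * R))) (j : nat) : R := nth j (atoms H) 0.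
Definition amem (H : list (list (R * R))) (i j : nat) : bool := in_dintb (edge H i) (atom H j).

Lemma in_ivalb_iff I x : in_ivalb I x = true <-> fst I <= x <= snd I.
Proof.
  unfold in_ivalb. destruct (Rle_dec (fst I) x), (Rle_dec x (snd I));
    split; intros; try lra; try discriminate; auto.
Qed.

Lemma in_dintb_iff h x : in_dintb h x = true <-> exists I, In I h /\ fst I <= x <= snd I.
Proof.
  unfold in_dintb. rewrite existsb_exists.
  split; intros [I [HI Hx]]; exists I; rewrite in_ivalb_iff in *; auto.
Qed.

Lemma in_dint_iff h x : in_dint h x <-> exists I, In I h /\ fst I <= x <= snd I.
Proof. unfold in_dint. rewrite Exists_exists. unfold in_ival. tauto. Qed.

Lemma atoms_sorted H : StronglySorted Rlt (atoms H).
Proof. apply sort_uniq_sorted. Qed.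

Lemma atoms_NoDup H : NoDup (atoms H).
Proof. apply sorted_NoDup, atoms_sorted. Qed.

Lemma atoms_enum H : atoms H = map (atom H) (seq 0 (natoms H)).
Proof.
  unfold atom, natoms. induction (atoms H) as [|a l IH]; simpl; auto.
  f_equal. rewrite <- seq_shift, map_map. exact IH.
Qed.

Lemma edge_component_le d H i I : is_dint_hypergraph d H -> (i < length H)%nat ->
  In I (edge H i) -> fst I <= snd I.
Proof.
  intros Hd Hi HI. unfold is_dint_hypergraph in Hd. rewrite Forall_forall in Hd.
  destruct (Hd _ (nth_In H [] Hi)) as [_ [Hle _]]. rewrite Forall_forall in Hle. auto.
Qed.

Lemma left_is_atom H i I : (i < length H)%nat -> In I (edge H i) ->
  exists j, (j < natoms H)%nat /\ atom H j = fst I.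
Proof.
  intros Hi HI. apply In_nth. apply sort_uniq_In. unfold lefts.
  apply in_flat_map. exists (edge H i). split; [apply nth_In; auto|]. apply in_map; auto.
Qed.

Lemma atom_in_range H I j : (j < natoms H)%nat ->
  (fst I <= atom H j <= snd I <->
   (rank_lt (atoms H) (fst I) <= j < rank_le (atoms H) (snd I))%nat).
Proof.
  intros Hj. unfold atom.
  pose proof (rank_lt_spec (atoms H) (fst I) (atoms_sorted H) j Hj) as Hlt.
  pose proof (rank_le_spec (atoms H) (snd I) (atoms_sorted H) j Hj) as Hle.
  destruct (Rlt_dec (nth j (atoms H) 0) (fst I)) as [Hx|Hx].
  - pose proof (proj1 Hlt Hx). split; [intros; lra|lia].
  - assert (~ (j < rank_lt (atoms H) (fst I))%nat) by (rewrite <- Hlt; auto).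
    rewrite Hle. split; intros [? ?]; split; auto; [lia|lra].
Qed.

(* Every component of an edge contains an atom, so its rank range is nonempty. *)
Lemma component_range_nonempty H i I : (i < length H)%nat -> In I (edge H i) ->
  fst I <= snd I -> (rank_lt (atoms H) (fst I) < rank_le (atoms H) (snd I))%nat.
Proof.
  intros Hi HI Hle. destruct (left_is_atom H i I Hi HI) as [j [Hj Hp]].
  pose proof (proj1 (atom_in_range H I j Hj)) as Hr. rewrite Hp in Hr.
  specialize (Hr (conj (Rle_refl _) Hle)). lia.
Qed.

Lemma edge_has_atom d H i : is_dint_hypergraph d H -> (i < length H)%nat ->
  exists j, (j < natoms H)%nat /\ amem H i j = true.
Proof.
  intros Hd Hi. unfold is_dint_hypergraph in Hd. rewrite Forall_forall in Hd.
  assert (Hdi : is_dinterval d (edge H i)) by (apply Hd, nth_In; auto).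
  destruct Hdi as [[Hl _] [Hle _]].
  destruct (edge H i) as [|I rest] eqn:E; simpl in Hl; [lia|].
  destruct (left_is_atom H i I Hi) as [j [Hj Hp]]; [rewrite E; simpl; auto|].
  exists j. split; auto. unfold amem. rewrite E. apply in_dintb_iff. exists I.
  split; [simpl; auto|]. rewrite Forall_forall in Hle. specialize (Hle I (or_introl eq_refl)). lra.
Qed.

(* Two intersecting edges share an atom: the larger of the two left endpoints. *)
Lemma meeting_edges_share_atom H i i' x : (i < length H)%nat -> (i' < length H)%nat ->
  in_dint (edge H i) x -> in_dint (edge H i') x ->
  exists j, (j < natoms H)%nat /\ amem H i j = true /\ amem H i' j = true.
Proof.
  intros Hi Hi' Hx Hx'. rewrite in_dint_iff in Hx, Hx'.
  destruct Hx as [I [HI HxI]], Hx' as [J [HJ HxJ]].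
  destruct (Rle_dec (fst I) (fst J)).
  - destruct (left_is_atom H i' J Hi' HJ) as [j [Hj Hp]].
    exists j. unfold amem. rewrite !in_dintb_iff, Hp.
    repeat split; auto; [exists I|exists J]; split; auto; lra.
  - destruct (left_is_atom H i I Hi HI) as [j [Hj Hp]].
    exists j. unfold amem. rewrite !in_dintb_iff, Hp.
    repeat split; auto; [exists I|exists J]; split; auto; lra.
Qed.

Lemma in_ivalb_atom H I j : (j < natoms H)%nat ->
  in_ivalb I (atom H j) =
  andb (Nat.leb (rank_lt (atoms H) (fst I)) j) (Nat.ltb j (rank_le (atoms H) (snd I))).
Proof.
  intros Hj. pose proof (atom_in_range H I j Hj) as Hr. rewrite <- in_ivalb_iff in Hr.
  apply Bool.eq_true_iff_eq. rewrite Hr, Bool.andb_true_iff, Nat.leb_le, Nat.ltb_lt.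
  reflexivity.
Qed.

Definition atot (H : list (list (R * R))) (G : nat -> R) : R :=
  Rsum (map G (seq 0 (natoms H))).

Definition aesum (H : list (list (R * R))) (G : nat -> R) (i : nat) : R :=
  Rsum (map (fun j => if amem H i j then G j else 0) (seq 0 (natoms H))).

Definition is_acover (H : list (list (R * R))) (w : nat -> nat) (G : nat -> R) : Prop :=
  (forall j, (j < natoms H)%nat -> 0 <= G j) /\
  (forall i, (i < length H)%nat -> INR (w i) <= aesum H G i).

Definition IsAtomTau (H : list (list (R * R))) (w : nat -> nat) (V : R) : Prop :=
  (forall G, is_acover H w G -> V <= atot H G) /\
  (forall b, (forall G, is_acover H w G -> b <= atot H G) -> b <= V).

Lemma atot_nonneg H w G : is_acover H w G -> 0 <= atot H G.
Proof. intros [HG _]. apply Rsum_map_nonneg. intros j Hj. apply in_seq in Hj. apply HG. lia. Qed.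

Definition total_weight (H : list (list (R * R))) (w : nat -> nat) : nat :=
  list_sum (map w (seq 0 (length H))).

Lemma weight_le_total H w i : (i < length H)%nat -> (w i <= total_weight H w)%nat.
Proof. intros. apply list_sum_ge_term. apply in_seq. lia. Qed.

Lemma acover_exists d H w : is_dint_hypergraph d H -> exists G, is_acover H w G.
Proof.
  intros Hd. exists (fun _ => INR (total_weight H w)). split; [intros; apply pos_INR|].
  intros i Hi. destruct (edge_has_atom d H i Hd Hi) as [j [Hj Ha]].
  eapply Rle_trans;
    [|apply (Rsum_ge_term (fun j => if amem H i j then INR (total_weight H w) else 0) _ j)].
  - rewrite Ha. apply le_INR, weight_le_total; auto.
  - intros x _. destruct (amem H i x); [apply pos_INR|lra].
  - apply in_seq; lia.
Qed.

Lemma atom_tau_exists d H w : is_dint_hypergraph d H -> exists V, IsAtomTau H w V.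
Proof.
  intros Hd.
  destruct (inf_exists (fun x => exists G, is_acover H w G /\ atot H G = x)) as [V [Hlb Hglb]].
  - destruct (acover_exists d H w Hd) as [G HG]. eauto.
  - intros x [G [HG <-]]. eapply atot_nonneg; eauto.
  - exists V. split.
    + intros G HG. apply Hlb. eauto.
    + intros b Hb. apply Hglb. intros x [G [HG <-]]. auto.
Qed.

Definition ival_weight (H : list (list (R * R))) (G : nat -> R) (I : R * R) : R :=
  Rsum (map (fun j => if in_ivalb I (atom H j) then G j else 0) (seq 0 (natoms H))).

Lemma ival_weight_range H G I :
  (rank_lt (atoms H) (fst I) <= rank_le (atoms H) (snd I))%nat ->
  ival_weight H G I = Rsum (map G (seq (rank_lt (atoms H) (fst I))
    (rank_le (atoms H) (snd I) - rank_lt (atoms H) (fst I)))).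
Proof.
  intros Hr. pose proof (rank_le_length (atoms H) (snd I)).
  rewrite <- (filter_seq_range _ _ (natoms H)) by (unfold natoms; lia).
  rewrite Rsum_filter. apply Rsum_map_ext. intros j Hj. apply in_seq in Hj.
  rewrite in_ivalb_atom by lia. reflexivity.
Qed.

(* Pigeonhole: some component of edge i carries a 1/d share of its demand. *)
Lemma heavy_component d H w G i : is_dint_hypergraph d H -> (i < length H)%nat ->
  is_acover H w G -> exists I, In I (edge H i) /\ INR (w i) <= INR d * ival_weight H G I.
Proof.
  intros Hd Hi [G0 Gc].
  unfold is_dint_hypergraph in Hd. rewrite Forall_forall in Hd.
  assert (Hdi : is_dinterval d (edge H i)) by (apply Hd, nth_In; auto).
  destruct Hdi as [[Hl1 Hl2] _].
  apply NNPP. intros Hno.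
  assert (Hlt : forall I, In I (edge H i) -> INR d * ival_weight H G I < INR (w i)).
  { intros I HI. apply Rnot_le_lt. intros Hc. apply Hno. exists I; auto. }
  assert (Hsplit : aesum H G i <= Rsum (map (ival_weight H G) (edge H i))).
  { unfold aesum, ival_weight. rewrite <- Rsum_exchange. apply Rsum_map_le. intros j Hj.
    apply in_seq in Hj.
    assert (Hnn : forall I, In I (edge H i) ->
              0 <= (if in_ivalb I (atom H j) then G j else 0)).
    { intros I _. destruct (in_ivalb I (atom H j)); [apply G0; lia|lra]. }
    destruct (amem H i j) eqn:Ea; [|apply Rsum_map_nonneg; auto].
    apply in_dintb_iff in Ea. destruct Ea as [I [HI HIx]].
    apply in_ivalb_iff in HIx.
    pose proof (Rsum_ge_term _ _ I Hnn HI) as Hge. cbv beta in Hge.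
    rewrite HIx in Hge. exact Hge. }
  assert (Hsum : INR d * Rsum (map (ival_weight H G) (edge H i)) <
                 INR (length (edge H i)) * INR (w i)).
  { rewrite <- Rsum_map_scal, <- Rsum_map_const. apply Rsum_map_lt; auto.
    destruct (edge H i); simpl in *; [lia|discriminate]. }
  pose proof (Gc i Hi). pose proof (pos_INR (w i)). pose proof (pos_INR d).
  assert (INR (length (edge H i)) <= INR d) by (apply le_INR; auto).
  nra.
Qed.

(* With cum k = d (G_0 + ... + G_(k-1)), atom j receives
   floor (cum (j+1)) - floor (cum j); on the atoms of a heavy component this
   telescopes to at least w i. *)
Section Rounding.
Variables (d : nat) (H : list (list (R * R))) (w : nat -> nat) (G : nat -> R).
Hypothesis (Hd : is_dint_hypergraph d H) (HG : is_acover H w G).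

Let m := natoms H.
Let Gp j := Rmax 0 (G j).
Let cum k := INR d * Rsum (map Gp (seq 0 k)).
Let rounded j := Z.to_nat (Int_part (cum (S j)) - Int_part (cum j)).

Lemma Gp_eq j : (j < m)%nat -> Gp j = G j.
Proof. intros. apply Rmax_right, (proj1 HG). auto. Qed.

Lemma cum_S k : cum (S k) = cum k + INR d * Gp k.
Proof. unfold cum. rewrite seq_S, map_app, Rsum_app. simpl. lra. Qed.

Lemma cum_mono k k' : (k <= k')%nat -> cum k <= cum k'.
Proof.
  induction 1; [lra|]. rewrite cum_S.
  assert (0 <= INR d * Gp m0) by (apply Rmult_le_pos; [apply pos_INR|apply Rmax_l]).
  lra.
Qed.

Lemma rounded_telescope lo k :
  list_sum (map rounded (seq lo k)) = Z.to_nat (Int_part (cum (lo + k)) - Int_part (cum lo)).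
Proof.
  induction k.
  - rewrite Nat.add_0_r. simpl. lia.
  - rewrite seq_S, map_app, list_sum_app, IHk. simpl. unfold rounded.
    replace (lo + S k)%nat with (S (lo + k)) by lia.
    pose proof (Int_part_mono _ _ (cum_mono lo (lo + k) ltac:(lia))).
    pose proof (Int_part_mono _ _ (cum_mono (lo + k) (S (lo + k)) ltac:(lia))).
    lia.
Qed.

Lemma rounded_cover i : (i < length H)%nat ->
  (w i <= list_sum (map (fun j => if amem H i j then rounded j else 0%nat) (seq 0 m)))%nat.
Proof.
  intros Hi. destruct (heavy_component d H w G i Hd Hi HG) as [I [HI Hheavy]].
  set (lo := rank_lt (atoms H) (fst I)). set (hi := rank_le (atoms H) (snd I)).
  assert (Hlohi : (lo < hi)%nat).
  { apply (component_range_nonempty H i); eauto using edge_component_le. }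
  assert (Hhim : (hi <= m)%nat) by apply rank_le_length.
  assert (Hcum : cum hi = cum lo + INR d * ival_weight H G I).
  { rewrite ival_weight_range by (fold lo hi; lia). fold lo hi. unfold cum.
    replace hi with (lo + (hi - lo))%nat at 1 by lia.
    rewrite seq_app, map_app, Rsum_app. simpl.
    rewrite (Rsum_map_ext Gp G (seq lo _))
      by (intros j Hj; apply in_seq in Hj; apply Gp_eq; lia).
    lra. }
  assert (Hfloor : (Int_part (cum lo) + Z.of_nat (w i) <= Int_part (cum hi))%Z).
  { apply Int_part_ge. rewrite plus_IZR, <- INR_IZR_INZ. pose proof (Int_part_le (cum lo)). lra. }
  pose proof (rounded_telescope lo (hi - lo)) as Htel.
  replace (lo + (hi - lo))%nat with hi in Htel by lia.
  rewrite <- (filter_seq_range lo hi m), list_sum_filter in Htel by lia.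
  eapply Nat.le_trans; [|apply (list_sum_map_le
    (fun j => if (Nat.leb lo j && Nat.ltb j hi)%bool then rounded j else 0%nat))].
  - rewrite Htel. lia.
  - intros j Hj. apply in_seq in Hj.
    destruct (Nat.leb lo j && Nat.ltb j hi)%bool eqn:E; [|lia].
    replace (amem H i j) with true; [lia|]. symmetry.
    unfold amem. apply in_dintb_iff. exists I. split; auto.
    apply in_ivalb_iff. rewrite in_ivalb_atom by (unfold m in *; lia). exact E.
Qed.

Lemma rounded_total : INR (list_sum (map rounded (seq 0 m))) <= INR d * atot H G.
Proof.
  rewrite rounded_telescope. simpl.
  assert (Hcum0 : cum 0 = 0) by (unfold cum; simpl; lra).
  assert (Hfl0 : Int_part 0 = 0%Z).
  { pose proof (Int_part_ge 0 0 (Rle_refl _)) as Hge. pose proof (Int_part_le 0) as Hle.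
    apply le_IZR in Hle. lia. }
  rewrite Hcum0, Hfl0, Z.sub_0_r.
  assert (0 <= Int_part (cum m))%Z
    by (rewrite <- Hfl0, <- Hcum0; apply Int_part_mono, cum_mono; lia).
  rewrite INR_IZR_INZ, Z2Nat.id by auto.
  eapply Rle_trans; [apply Int_part_le|]. right. unfold cum, atot. f_equal.
  apply Rsum_map_ext. intros j Hj. apply in_seq in Hj. apply Gp_eq. lia.
Qed.

Let g (x : R) : nat :=
  list_sum (map (fun j => if Req_EM_T x (atom H j) then rounded j else 0%nat) (seq 0 m)).

Lemma g_atom j0 : (j0 < m)%nat -> g (atom H j0) = rounded j0.
Proof.
  intros Hj0. unfold g.
  rewrite (map_ext_in _ (fun j => if andb (Nat.leb j0 j) (Nat.ltb j (S j0)) then rounded j else 0%nat)).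
  - rewrite <- list_sum_filter, filter_seq_range by lia.
    replace (S j0 - j0)%nat with 1%nat by lia. simpl. lia.
  - intros j Hj. apply in_seq in Hj.
    destruct (Req_EM_T (atom H j0) (atom H j)) as [E|E].
    + assert (j0 = j).
      { apply (proj1 (NoDup_nth (atoms H) 0) (atoms_NoDup H)); [unfold m, natoms in *; lia..|].
        exact E. }
      subst. destruct (Nat.leb_spec j j), (Nat.ltb_spec j (S j)); auto; lia.
    + destruct (Nat.leb_spec j0 j), (Nat.ltb_spec j (S j0)); simpl; auto.
      replace j with j0 in E by lia. tauto.
Qed.

Lemma g_is_wcover : is_wcover H w (atoms H) g.
Proof.
  split.
  - split; [apply atoms_NoDup|]. intros x Hx. unfold g.
    rewrite (map_ext_in _ (fun _ => 0%nat)).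
    + rewrite list_sum_map_const. lia.
    + intros j Hj. apply in_seq in Hj. destruct (Req_EM_T x (atom H j)) as [->|]; auto.
      exfalso. apply Hx. apply nth_In. unfold m, natoms in *. lia.
  - intros i Hi. unfold edge_sum. rewrite atoms_enum, map_map.
    rewrite (map_ext_in _ (fun j => if amem H i j then rounded j else 0%nat)).
    + apply rounded_cover; auto.
    + intros j Hj. apply in_seq in Hj. unfold amem.
      destruct (in_dintb _ _); auto. apply g_atom. lia.
Qed.

Lemma tau_le_d_atot t : IsTau H w t -> INR t <= INR d * atot H G.
Proof.
  intros [_ Hmin]. specialize (Hmin _ _ g_is_wcover).
  unfold total in Hmin. rewrite atoms_enum, map_map in Hmin.
  rewrite (map_ext_in _ rounded) in Hmin by (intros j Hj; apply in_seq in Hj; apply g_atom; lia).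
  apply le_INR in Hmin. exact (Rle_trans _ _ _ Hmin rounded_total).
Qed.
End Rounding.

Lemma tau_le_d_atom_tau d H w t V : is_dint_hypergraph d H ->
  IsTau H w t -> IsAtomTau H w V -> INR t <= INR d * V.
Proof.
  intros Hd HT [_ Hglb]. apply Rle_plus_epsilon. intros eps Heps.
  assert (Hd0 : 0 < INR d + 1) by (pose proof (pos_INR d); lra).
  destruct (inf_approx (fun x => exists G, is_acover H w G /\ atot H G = x) V)
    with (eps := eps / (INR d + 1)) as [x [[G [HG <-]] HGV]].
  - intros b Hb. apply Hglb. intros G HG. apply Hb. eauto.
  - apply Rdiv_lt_0_compat; lra.
  - pose proof (tau_le_d_atot d H w G Hd HG t HT).
    pose proof (share_le (INR d) eps (pos_INR d) (Rlt_le _ _ Heps)).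
    pose proof (pos_INR d). nra.
Qed.

(* Blow-up: given block sizes b j >= 1, atom j becomes the block of integers
   offset j + 1 .. offset j + b j, and a component I of an edge becomes the run of
   consecutive integers covering the blocks of the atoms in I.  Membership of
   a vertex of block j in the image of an edge is membership of atom j in the
   edge, so sizes, sums and intersections transfer along the blow-up. *)
Section BlowUp.
Variables (H : list (list (R * R))) (b : nat -> nat).
Hypothesis hb : forall j, (1 <= b j)%nat.

Definition offset (k : nat) : nat := list_sum (map b (seq 0 k)).
Definition nblown : nat := offset (natoms H).
Definition blow_comp (I : R * R) : nat * nat :=
  (S (offset (rank_lt (atoms H) (fst I))), offset (rank_le (atoms H) (snd I))).
Definition blow_edge (h : list (R * R)) : list (nat * nat) := map blow_comp h.
Definition block (j : nat) : list nat := seq (S (offset j)) (b j).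

Lemma offset_S k : offset (S k) = (offset k + b k)%nat.
Proof. unfold offset. rewrite seq_S, map_app, list_sum_app. simpl. lia. Qed.

Lemma offset_mono k k' : (k <= k')%nat -> (offset k <= offset k')%nat.
Proof. induction 1; auto. rewrite offset_S. lia. Qed.

Lemma offset_strict k k' : (k < k')%nat -> (offset k < offset k')%nat.
Proof.
  intros Hk. pose proof (offset_mono (S k) k' Hk) as Hle. rewrite offset_S in Hle.
  pose proof (hb k). lia.
Qed.

Lemma offset_ge k : (k <= offset k)%nat.
Proof. induction k; [simpl; lia|]. rewrite offset_S. pose proof (hb k). lia. Qed.

Lemma vertex_in_block k v : (1 <= v <= offset k)%nat ->
  exists j, (j < k)%nat /\ (offset j < v <= offset (S j))%nat.
Proof.
  induction k; intros Hv; [unfold offset in Hv; simpl in Hv; lia|].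
  destruct (Nat.le_gt_cases v (offset k)).
  - destruct IHk as [j [Hj Hj']]; [lia|]. exists j; split; auto.
  - exists k. split; [lia|]. lia.
Qed.

Lemma block_range j v : In v (block j) -> (offset j < v <= offset (S j))%nat.
Proof. unfold block. intros Hv. apply in_seq in Hv. rewrite offset_S. lia. Qed.

Lemma blow_comp_mem I j v : (j < natoms H)%nat -> (offset j < v <= offset (S j))%nat ->
  in_divalb (blow_comp I) v = in_ivalb I (atom H j).
Proof.
  intros Hj Hv. rewrite in_ivalb_atom by auto. unfold in_divalb, blow_comp. cbn [fst snd].
  set (lo := rank_lt (atoms H) (fst I)). set (hi := rank_le (atoms H) (snd I)).
  destruct (Nat.leb_spec lo j) as [Hlo|Hlo].
  - assert (offset lo <= offset j)%nat by (apply offset_mono; auto).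
    replace (Nat.leb (S (offset lo)) v) with true by (symmetry; apply Nat.leb_le; lia).
    destruct (Nat.ltb_spec j hi).
    + assert (offset (S j) <= offset hi)%nat by (apply offset_mono; lia).
      apply Nat.leb_le. lia.
    + assert (offset hi <= offset j)%nat by (apply offset_mono; lia).
      apply Nat.leb_gt. lia.
  - assert (offset (S j) <= offset lo)%nat by (apply offset_mono; lia).
    replace (Nat.leb (S (offset lo)) v) with false by (symmetry; apply Nat.leb_gt; lia).
    reflexivity.
Qed.

Lemma blow_edge_mem h j v : (j < natoms H)%nat -> (offset j < v <= offset (S j))%nat ->
  in_ddintb (blow_edge h) v = in_dintb h (atom H j).
Proof.
  intros Hj Hv. unfold in_ddintb, blow_edge, in_dintb. induction h; simpl; auto.
  rewrite (blow_comp_mem _ j), IHh; auto.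
Qed.

Lemma vertices_blocks k : seq 1 (offset k) = flat_map block (seq 0 k).
Proof.
  induction k; [auto|]. rewrite offset_S, seq_app, IHk, seq_S, flat_map_app. simpl.
  rewrite app_nil_r. reflexivity.
Qed.

Lemma block_vertex j v : (j < natoms H)%nat -> In v (block j) -> In v (vertices nblown).
Proof.
  intros Hj Hv. apply block_range in Hv. unfold vertices, nblown. apply in_seq.
  pose proof (offset_mono (S j) (natoms H) ltac:(lia)). lia.
Qed.

Lemma blow_edge_vertices h : filter (in_ddintb (blow_edge h)) (vertices nblown) =
  flat_map (fun j => if in_dintb h (atom H j) then block j else []) (seq 0 (natoms H)).
Proof.
  unfold vertices, nblown. rewrite vertices_blocks, filter_flat_map.
  apply flat_map_ext_in. intros j Hj. apply in_seq in Hj.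
  destruct (in_dintb h (atom H j)) eqn:E;
    [apply filter_all_true|apply filter_all_false];
    intros v Hv; rewrite (blow_edge_mem _ j) by first [lia | apply block_range; auto]; auto.
Qed.

Lemma blow_edge_size h : dsize nblown (blow_edge h) =
  list_sum (map (fun j => if in_dintb h (atom H j) then b j else 0%nat) (seq 0 (natoms H))).
Proof.
  unfold dsize. rewrite blow_edge_vertices, length_flat_map. f_equal. apply map_ext. intros j.
  destruct (in_dintb h (atom H j)); auto. apply length_seq.
Qed.

Lemma blow_edge_sum h (g : nat -> R) :
  Rsum (map g (filter (in_ddintb (blow_edge h)) (vertices nblown))) =
  Rsum (map (fun j => if in_dintb h (atom H j) then Rsum (map g (block j)) else 0)
    (seq 0 (natoms H))).
Proof.
  rewrite blow_edge_vertices, Rsum_flat_map. apply Rsum_map_ext. intros j _.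
  destruct (in_dintb h (atom H j)); auto.
Qed.

Lemma blow_total (g : nat -> R) :
  frac_total nblown g = Rsum (map (fun j => Rsum (map g (block j))) (seq 0 (natoms H))).
Proof. unfold frac_total, vertices, nblown. rewrite vertices_blocks, Rsum_flat_map. auto. Qed.

Lemma ForallOrdPairs_map {A B} (R1 : A -> A -> Prop) (R2 : B -> B -> Prop) (f : A -> B) l :
  ForallOrdPairs R1 l -> (forall x y, In x l -> In y l -> R1 x y -> R2 (f x) (f y)) ->
  ForallOrdPairs R2 (map f l).
Proof.
  induction 1 as [|a l Ha _ IH]; simpl; intros Hf; constructor.
  - rewrite Forall_forall in *. intros y Hy. apply in_map_iff in Hy.
    destruct Hy as [z [<- Hz]]. apply Hf; simpl; auto.
  - apply IH. intros; apply Hf; simpl; auto.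
Qed.

Lemma blow_edge_discrete d i : is_dint_hypergraph d H -> (i < length H)%nat ->
  is_discrete_dinterval d nblown (blow_edge (edge H i)).
Proof.
  intros Hd Hi. assert (Hdi : is_dinterval d (edge H i))
    by (unfold is_dint_hypergraph in Hd; rewrite Forall_forall in Hd; apply Hd, nth_In; auto).
  destruct Hdi as [Hl [_ Hdis]].
  split; [unfold blow_edge; rewrite length_map; auto|]. split.
  - apply Forall_forall. intros J HJ. apply in_map_iff in HJ. destruct HJ as [I [<- HI]].
    pose proof (component_range_nonempty H i I Hi HI (edge_component_le d H i I Hd Hi HI)) as Hr.
    pose proof (offset_strict _ _ Hr).
    pose proof (offset_mono _ _ (rank_le_length (atoms H) (snd I))).
    unfold blow_comp, nblown, natoms in *. simpl. lia.
  - apply ForallOrdPairs_map with (R1 := ivals_disjoint); auto.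
    intros I J _ _ Hij v [Hv1 Hv2].
    assert (Hvr : (1 <= v <= nblown)%nat).
    { unfold in_divalb, blow_comp in Hv1. cbn [fst snd] in Hv1.
      apply andb_prop in Hv1. destruct Hv1 as [Hlo Hhi].
      apply Nat.leb_le in Hlo, Hhi.
      pose proof (offset_mono _ _ (rank_le_length (atoms H) (snd I))).
      unfold nblown, natoms. lia. }
    destruct (vertex_in_block (natoms H) v Hvr) as [j [Hj Hjv]].
    rewrite (blow_comp_mem _ j) in Hv1 by auto. rewrite (blow_comp_mem _ j) in Hv2 by auto.
    apply in_ivalb_iff in Hv1, Hv2. apply (Hij (atom H j)). unfold in_ival. auto.
Qed.
End BlowUp.

Lemma tau_star_len_exists n T : exists ts, IsTauStarLen n T ts.
Proof.
  destruct (inf_exists (fun x => exists g, is_frac_lcover n T g /\ frac_total n g = x))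
    as [ts [Hlb Hglb]].
  - exists (frac_total n (fun _ => 1)), (fun _ => 1). split; auto. split; [intros; lra|].
    intros i _. rewrite Rsum_map_const. unfold dsize. lra.
  - intros x [g [[Hg0 _] <-]]. apply Rsum_map_nonneg. auto.
  - exists ts. split.
    + intros g Hg. apply Hlb. eauto.
    + intros b Hb. apply Hglb. intros x [g [Hg <-]]. auto.
Qed.

Lemma nu_len_exists n T : exists nu, IsNuLen n T nu.
Proof.
  set (value M := list_sum (map (fun i => dsize n (dedge T i)) M)).
  destruct (nat_max_exists (fun k => exists M, is_dmatching n T M /\ value M = k)
    (length T * n)) as [nu [[M [HM HMv]] Hmax]].
  - exists 0%nat, []. split; auto. split; [constructor|]. split; simpl; tauto.
  - intros k [M [[HMnd [HMr _]] <-]]. unfold value.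
    eapply Nat.le_trans; [apply (list_sum_map_le _ (fun _ => n))|].
    + intros i _. unfold dsize, vertices. rewrite <- (length_seq n 1) at 2.
      apply filter_length_le.
    + rewrite list_sum_map_const. apply Nat.mul_le_mono_r.
      rewrite <- (length_seq (length T) 0). apply NoDup_incl_length; auto.
      intros i Hi. apply in_seq. specialize (HMr i Hi). lia.
  - exists nu. split; [eauto|]. intros M' HM'. apply Hmax. eauto.
Qed.

Section FixedParameters.
Variables (d : nat) (alpha : R).
Hypothesis halpha : 0 < alpha.
Hypothesis Hdisc : forall (n : nat) (T : list (list (nat * nat))),
     (1 <= n)%nat -> is_discrete_hypergraph d n T ->
     forall (ts : R) (nu : nat), IsTauStarLen n T ts -> IsNuLen n T nu ->
       ts <= alpha * INR d * INR nu.
Variables (H : list (list (R * R))) (w : nat -> nat) (nu : nat) (V : R).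
Hypothesis (Hd : is_dint_hypergraph d H) (HNu : IsNu H w nu) (Hne : H <> [])
  (HV : forall G, is_acover H w G -> V <= atot H G).
Variables (delta c : R) (G : nat -> R).
Hypothesis (hdelta : 0 < delta) (hc : 0 < c) (HG : is_acover H w G).

Let W := total_weight H w.
Let mix := delta / (INR W + delta).

Definition bsize (j : nat) : nat := Nat.max 1 (Z.to_nat (up (c * G j))).
Lemma bsize_pos j : (1 <= bsize j)%nat.
Proof. apply Nat.le_max_l. Qed.

Lemma bsize_bounds j : (j < natoms H)%nat -> c * G j < INR (bsize j) <= c * G j + 1.
Proof.
  intros Hj. pose proof (proj1 HG j Hj). destruct (archimed (c * G j)) as [Hup1 Hup2].
  assert (0 <= c * G j) by (apply Rmult_le_pos; lra).
  assert (0 < up (c * G j))%Z by (apply lt_IZR; simpl; lra).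
  unfold bsize. rewrite Nat.max_r by lia. rewrite INR_IZR_INZ, Z2Nat.id by lia. lra.
Qed.

Definition tight (i : nat) : bool :=
  if Rle_dec (aesum H G i) (INR (w i) + delta) then true else false.
Definition tight_edges : list nat := filter tight (seq 0 (length H)).
Definition blown : list (list (nat * nat)) :=
  map (fun i => blow_edge H bsize (edge H i)) tight_edges.
Let n := nblown H bsize.

Lemma tight_edges_spec i : In i tight_edges <->
  (i < length H)%nat /\ aesum H G i <= INR (w i) + delta.
Proof.
  unfold tight_edges, tight. rewrite filter_In, in_seq.
  destruct (Rle_dec _ _); split; intros [? ?]; split; auto; try lia; discriminate.
Qed.

Lemma dedge_blown k : (k < length tight_edges)%nat ->
  dedge blown k = blow_edge H bsize (edge H (nth k tight_edges 0%nat)).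
Proof.
  intros Hk. unfold dedge, blown.
  rewrite (nth_indep _ [] (blow_edge H bsize (edge H 0))) by (rewrite length_map; auto).
  apply (map_nth (fun i => blow_edge H bsize (edge H i))).
Qed.

(* H has an edge, hence an atom, hence a blown-up vertex. *)
Lemma n_pos : (1 <= n)%nat.
Proof.
  assert (Hlen : (0 < length H)%nat) by (destruct H; [congruence|simpl; lia]).
  destruct (edge_has_atom d H 0 Hd Hlen) as [j [Hj _]].
  pose proof (offset_ge bsize bsize_pos (natoms H)). unfold n, nblown. lia.
Qed.

Lemma blown_discrete : is_discrete_hypergraph d n blown.
Proof.
  apply Forall_forall. intros e He. apply in_map_iff in He. destruct He as [i [<- Hi]].
  apply tight_edges_spec in Hi. apply blow_edge_discrete; [apply bsize_pos|auto|tauto].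
Qed.

Lemma blown_size_bounds i : (i < length H)%nat ->
  c * aesum H G i <= INR (dsize n (blow_edge H bsize (edge H i))) <=
  c * aesum H G i + INR (natoms H).
Proof.
  intros Hi. unfold n. rewrite blow_edge_size by apply bsize_pos.
  rewrite INR_list_sum, map_map. unfold aesum. rewrite <- Rsum_map_scal. split.
  - apply Rsum_map_le. intros j Hj. apply in_seq in Hj. fold (amem H i j).
    destruct (amem H i j); [|simpl; lra]. pose proof (bsize_bounds j ltac:(lia)). lra.
  - replace (INR (natoms H)) with (Rsum (map (fun _ => 1) (seq 0 (natoms H))))
      by (rewrite Rsum_map_const, length_seq; lra).
    rewrite <- Rsum_map_plus. apply Rsum_map_le.
    intros j Hj. apply in_seq in Hj. fold (amem H i j).
    destruct (amem H i j); [|simpl; lra]. pose proof (bsize_bounds j ltac:(lia)). lra.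
Qed.

Lemma mix_bounds : 0 < mix <= 1.
Proof.
  unfold mix. pose proof (pos_INR W). split.
  - apply Rdiv_lt_0_compat; lra.
  - apply Rmult_le_reg_r with (INR W + delta); [lra|]. field_simplify; lra.
Qed.

(* On an edge that is not tight, the slack delta pays for the mixing. *)
Lemma mix_slack x : 0 <= x <= INR W -> mix * (x + delta) <= delta.
Proof.
  intros Hx. unfold mix. pose proof (pos_INR W).
  apply Rmult_le_reg_r with (INR W + delta); [lra|].
  field_simplify; [|lra]. nra.
Qed.

Lemma aesum_mix (A B : nat -> R) (p q : R) i :
  aesum H (fun j => p * A j + q * B j) i = p * aesum H A i + q * aesum H B i.
Proof.
  unfold aesum. rewrite <- !Rsum_map_scal, <- Rsum_map_plus. apply Rsum_map_ext.
  intros j _. destruct (amem H i j); lra.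
Qed.

Lemma atot_mix (A B : nat -> R) (p q : R) :
  atot H (fun j => p * A j + q * B j) = p * atot H A + q * atot H B.
Proof. unfold atot. rewrite <- !Rsum_map_scal, <- Rsum_map_plus. auto. Qed.

Definition pullback (g : nat -> R) (j : nat) : R := Rsum (map g (block bsize j)).

(* Mixing G with the pullback of a fractional ell-cover g of the blown-up
   hypergraph gives an atomic cover: tight edges are covered by g, the others
   by the slack of G. *)
Lemma mixed_cover g : is_frac_lcover n blown g ->
  is_acover H w (fun j => (1 - mix) * G j + (mix / c) * pullback g j).
Proof.
  intros [Hg0 Hgc]. set (Gb := pullback g).
  assert (Gb0 : forall j, (j < natoms H)%nat -> 0 <= Gb j).
  { intros j Hj. apply Rsum_map_nonneg. intros v Hv. apply Hg0.
    eapply block_vertex; eauto using bsize_pos. }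
  pose proof mix_bounds.
  assert (0 <= mix / c) by (apply Rlt_le, Rdiv_lt_0_compat; lra).
  split.
  - intros j Hj. pose proof (proj1 HG j Hj). pose proof (Gb0 j Hj). nra.
  - intros i Hi. rewrite aesum_mix.
    assert (0 <= aesum H Gb i).
    { apply Rsum_map_nonneg. intros j Hj. apply in_seq in Hj.
      destruct (amem H i j); [apply Gb0; lia|lra]. }
    pose proof (proj2 HG i Hi).
    destruct (tight i) eqn:Et.
    + assert (HiT : In i tight_edges) by (apply filter_In; split; auto; apply in_seq; lia).
      destruct (In_nth tight_edges i 0%nat HiT) as [k [Hk Hki]].
      assert (Hcov : INR (dsize n (blow_edge H bsize (edge H i))) <= aesum H Gb i).
      { specialize (Hgc k ltac:(unfold blown; rewrite length_map; auto)).
        rewrite dedge_blown, Hki in Hgc by auto.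
        unfold n in Hgc. rewrite blow_edge_sum in Hgc by apply bsize_pos. exact Hgc. }
      pose proof (proj1 (blown_size_bounds i Hi)).
      assert (mix * INR (w i) <= mix / c * aesum H Gb i).
      { replace (mix * INR (w i)) with (mix / c * (c * INR (w i))) by (field; lra).
        apply Rmult_le_compat_l; nra. }
      nra.
    + unfold tight in Et. destruct (Rle_dec _ _) as [_|Hnt]; [discriminate|].
      pose proof (mix_slack (INR (w i)) (conj (pos_INR _) (le_INR _ _ (weight_le_total H w i Hi)))).
      nra.
Qed.

Lemma blown_tau_star_lower g : is_frac_lcover n blown g ->
  V <= (1 - mix) * atot H G + mix / c * frac_total n g.
Proof.
  intros Hg. pose proof (HV _ (mixed_cover g Hg)) as HVm.
  rewrite atot_mix in HVm. unfold n. rewrite blow_total by apply bsize_pos. exact HVm.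
Qed.

(* A matching of the blown-up hypergraph indexes a matching of H: two tight
   edges that meet share an atom, hence a vertex of its block. *)
Lemma blown_matching_lifts M : is_dmatching n blown M ->
  is_matching H (map (fun k => nth k tight_edges 0%nat) M).
Proof.
  intros [HMnd [HMr HMd]]. set (f k := nth k tight_edges 0%nat).
  assert (HMr' : forall k, In k M -> (k < length tight_edges)%nat).
  { intros k Hk. specialize (HMr k Hk). unfold blown in HMr. rewrite length_map in HMr. auto. }
  assert (HfH : forall k, In k M -> (f k < length H)%nat)
    by (intros k Hk; apply tight_edges_spec, nth_In; auto).
  split; [|split].
  - apply NoDup_map_NoDup_ForallPairs; auto. intros x y Hx Hy E.
    apply (proj1 (NoDup_nth tight_edges 0%nat) (NoDup_filter _ (seq_NoDup _ _))); auto.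
  - intros i Hi. apply in_map_iff in Hi. destruct Hi as [k [<- Hk]]. auto.
  - intros i i' Hi Hi' Hii' x [Hx Hx'].
    apply in_map_iff in Hi. destruct Hi as [k [<- Hk]].
    apply in_map_iff in Hi'. destruct Hi' as [k' [<- Hk']].
    destruct (meeting_edges_share_atom H (f k) (f k') x) as [j [Hj [A1 A2]]]; auto.
    apply (HMd k k' Hk Hk' ltac:(intros ->; auto) (S (offset bsize j))).
    rewrite !dedge_blown by auto. fold (f k) (f k').
    pose proof (bsize_pos j).
    rewrite !(blow_edge_mem H bsize _ j); auto; rewrite offset_S; lia.
Qed.

(* Hence nu_ell of the blown-up hypergraph is at most c (nu + delta |H|) + m |H|,
   since a tight edge has ell-value at most c (w + delta) + m. *)
Lemma blown_nu_upper nuT : IsNuLen n blown nuT ->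
  INR nuT <= c * INR nu + INR (length H) * (c * delta + INR (natoms H)).
Proof.
  intros [[M [HM Hval]] _]. pose proof (blown_matching_lifts M HM) as Hmatch.
  destruct HM as [HMnd [HMr _]].
  set (f k := nth k tight_edges 0%nat) in Hmatch.
  assert (HMr' : forall k, In k M -> (k < length tight_edges)%nat).
  { intros k Hk. specialize (HMr k Hk). unfold blown in HMr. rewrite length_map in HMr. auto. }
  destruct HNu as [_ HNmax]. specialize (HNmax _ Hmatch).
  unfold match_weight in HNmax. rewrite map_map in HNmax. apply le_INR in HNmax.
  rewrite INR_list_sum, map_map in HNmax.
  rewrite <- Hval, INR_list_sum, map_map.
  eapply Rle_trans.
  - apply (Rsum_map_le _ (fun k => c * INR (w (f k)) + (c * delta + INR (natoms H)))).
    intros k Hk. rewrite dedge_blown by auto. fold (f k).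
    destruct (proj1 (tight_edges_spec (f k)) (nth_In _ _ (HMr' k Hk))) as [Hi Htight].
    pose proof (proj2 (blown_size_bounds (f k) Hi)). nra.
  - rewrite Rsum_map_plus, Rsum_map_scal, Rsum_map_const.
    assert (INR (length M) <= INR (length H)).
    { apply le_INR. apply (Nat.le_trans _ (length tight_edges)).
      - rewrite <- (length_seq (length tight_edges) 0). apply NoDup_incl_length; auto.
        intros k Hk. apply in_seq. specialize (HMr' k Hk). lia.
      - unfold tight_edges. rewrite <- (length_seq (length H) 0) at 2.
        apply filter_length_le. }
    assert (0 <= c * delta + INR (natoms H)) by (pose proof (pos_INR (natoms H)); nra).
    nra.
Qed.

(* Combining both bounds with the hypothesis on the blown-up hypergraph:
   V - (1 - mix) atot G <= (mix / c) tau*_ell <= (mix / c) alpha d nu_ell,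
   which rearranges to the stated bound since atot G >= V. *)
Lemma atom_tau_fixed_bound :
  V <= alpha * INR d * (INR nu + INR (length H) * delta + INR (length H) * INR (natoms H) / c)
       + (atot H G - V) / mix.
Proof.
  set (X := alpha * INR d * (INR nu + INR (length H) * delta + INR (length H) * INR (natoms H) / c)).
  destruct (tau_star_len_exists n blown) as [ts Hts].
  destruct (nu_len_exists n blown) as [nuT HnuT].
  pose proof (Hdisc n blown n_pos blown_discrete ts nuT Hts HnuT) as Hdisc_blown.
  pose proof (blown_nu_upper nuT HnuT) as Hnu.
  pose proof mix_bounds as Hmix. pose proof (HV G HG) as HVG.
  assert (HA : 0 <= alpha * INR d) by (pose proof (pos_INR d); nra).
  assert (Hlow : (V - (1 - mix) * atot H G) * (c / mix) <= ts).
  { apply (proj2 Hts). intros g Hg. pose proof (blown_tau_star_lower g Hg).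
    apply Rmult_le_reg_r with (mix / c); [apply Rdiv_lt_0_compat; lra|].
    field_simplify; lra. }
  assert (Hts_X : ts <= (c / mix) * (mix * X)).
  { eapply Rle_trans; [exact Hdisc_blown|].
    replace ((c / mix) * (mix * X))
      with (alpha * INR d * (c * INR nu + INR (length H) * (c * delta + INR (natoms H))))
      by (unfold X; field; lra).
    apply Rmult_le_compat_l; auto. }
  assert (HY : V - (1 - mix) * atot H G <= mix * X).
  { apply Rmult_le_reg_r with (c / mix); [apply Rdiv_lt_0_compat; lra|]. nra. }
  apply Rmult_le_reg_l with mix; [lra|].
  replace (mix * (X + (atot H G - V) / mix)) with (mix * X + (atot H G - V)) by (field; lra).
  nra.
Qed.
End FixedParameters.

Lemma atom_tau_no_edges w V : IsAtomTau [] w V -> V <= 0.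
Proof.
  intros [Hlb _]. assert (HV0 : V <= atot [] (fun _ => 0)).
  { apply Hlb. split; [intros; lra|]. intros i Hi. simpl in Hi. lia. }
  unfold atot in HV0. simpl in HV0. lra.
Qed.

Lemma atom_tau_le d alpha H w nu V : 0 < alpha ->
  (forall (n : nat) (T : list (list (nat * nat))),
     (1 <= n)%nat -> is_discrete_hypergraph d n T ->
     forall (ts : R) (nu : nat), IsTauStarLen n T ts -> IsNuLen n T nu ->
       ts <= alpha * INR d * INR nu) ->
  is_dint_hypergraph d H -> IsNu H w nu -> IsAtomTau H w V ->
  V <= alpha * INR d * INR nu.
Proof.
  intros halpha Hdisc Hd HNu [Hlb Hglb].
  assert (HA : 0 <= alpha * INR d) by (pose proof (pos_INR d); nra).
  pose proof (pos_INR nu).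
  destruct H as [|h H'].
  - pose proof (atom_tau_no_edges w V (conj Hlb Hglb)). nra.
  - set (H := h :: H') in *. apply Rle_plus_epsilon. intros e He.
    set (A := alpha * INR d). set (E := INR (length H)). set (m := INR (natoms H)).
    pose proof (pos_INR (length H)). pose proof (pos_INR (natoms H)).
    assert (AE : 0 <= A * E) by (apply Rmult_le_pos; auto).
    assert (AEm : 0 <= A * E * m) by (apply Rmult_le_pos; auto).
    (* parameters making each error term of atom_tau_fixed_bound at most e / 3 *)
    set (delta := (e / 3) / (A * E + 1)).
    set (c := (A * E * m + 1) / (e / 3)).
    assert (Hdelta : 0 < delta) by (apply Rdiv_lt_0_compat; lra).
    assert (Hc : 0 < c) by (apply Rdiv_lt_0_compat; lra).
    set (mix := delta / (INR (total_weight H w) + delta)).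
    assert (Hmix : 0 < mix) by (pose proof (pos_INR (total_weight H w)); apply Rdiv_lt_0_compat; lra).
    destruct (inf_approx (fun x => exists G, is_acover H w G /\ atot H G = x) V)
      with (eps := mix * (e / 3)) as [x [[G [HG <-]] HGV]].
    + intros b Hb. apply Hglb. intros G HG. apply Hb. eauto.
    + apply Rmult_lt_0_compat; lra.
    + pose proof (atom_tau_fixed_bound d alpha halpha Hdisc H w nu V Hd HNu
        ltac:(discriminate) Hlb delta c G Hdelta Hc HG) as Hfixed.
      fold mix A E m in Hfixed.
      assert (A * E * delta <= e / 3) by (apply share_le; lra).
      assert (A * (E * m / c) <= e / 3).
      { replace (A * (E * m / c)) with (A * E * m * ((e / 3) / (A * E * m + 1)))
          by (unfold c; field; lra).
        apply share_le; lra. }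
      assert ((atot H G - V) / mix <= e / 3).
      { apply Rmult_le_reg_l with mix; auto. field_simplify; lra. }
      nra.
Qed.

Theorem theorem5p3 (d : nat) (alpha : R) (hd : (1 <= d)%nat) (halpha : 0 < alpha)
  (Hdisc : forall (n : nat) (T : list (list (nat * nat))),
     (1 <= n)%nat -> is_discrete_hypergraph d n T ->
     forall (ts : R) (nu : nat), IsTauStarLen n T ts -> IsNuLen n T nu ->
       ts <= alpha * INR d * INR nu) :
  forall (H : list (list (R * R))) (w : nat -> nat),
    is_dint_hypergraph d H ->
    forall (t nu : nat), IsTau H w t -> IsNu H w nu ->
      INR t <= alpha * (INR d ^ 2) * INR nu.
Proof.
  intros H w Hd t nu HT HN.
  destruct (atom_tau_exists d H w Hd) as [V HV].
  pose proof (tau_le_d_atom_tau d H w t V Hd HT HV) as Hround.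
  pose proof (atom_tau_le d alpha H w nu V halpha Hdisc Hd HN HV) as Hblow.
  pose proof (pos_INR d).
  replace (alpha * (INR d ^ 2) * INR nu) with (INR d * (alpha * INR d * INR nu)) by ring.
  eapply Rle_trans; [exact Hround|]. apply Rmult_le_compat_l; auto.
Qed.
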